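(* For all $\{\sigma_{i,A}\;\vert\; i\in I\}\subseteq\mathfrak{S}_A$ and $\sigma_B\in\mathfrak{S}_B$, $$\iota(\inf^{\mathfrak{S}_A}_{i\in I}\sigma_{i,A},\sigma_B)=\inf^{\check{S}_{AB}}_{i\in I}\iota(\sigma_{i,A},\sigma_B),$$ and for all $\{\sigma_{i,B}\;\vert\; i\in I\}\subseteq\mathfrak{S}_B$ and $\sigma_A\in\mathfrak{S}_A$, $$\iota(\sigma_A,\inf^{\mathfrak{S}_B}_{i\in I}\sigma_{i,B})=\inf^{\check{S}_{AB}}_{i\in I}\iota(\sigma_A,\sigma_{i,B}).$$
   Context: $\mathfrak{B}=\{\mathbf{Y},\mathbf{N},\bot\}$ with $\bot$ below the incomparable $\mathbf{Y},\mathbf{N}$, meet $\wedge$, involution $\overline{\cdot}$ exchanging $\mathbf{Y},\mathbf{N}$, and commutative product $\bullet$ with $x\bullet\mathbf{Y}=x$, $x\bullet\mathbf{N}=\mathbf{N}$, $\bot\bullet\bot=\bot$. $(\mathfrak{S}_A,\mathfrak{E}_A,\epsilon^{\mathfrak{S}_A})$, $(\mathfrak{S}_B,\mathfrak{E}_B,\epsilon^{\mathfrak{S}_B})$ are States/Effects Chu spaces (down-complete Inf semi-lattices of states and effects, infima written $\inf$, evaluation maps preserving infima in each variable, with negation of effects and a constant-$\mathbf{Y}$ effect $\mathfrak{Y}_{\mathfrak{E}}$). $\check{S}_{AB}$ is the maximal tensor product: the set of maps $\Phi:\mathfrak{E}_A\times\mathfrak{E}_B\to\mathfrak{B}$ preserving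 arbitrary infima in each variable, with $\Phi(\overline{\mathfrak{l}_A},\mathfrak{Y}_{\mathfrak{E}_B})=\overline{\Phi(\mathfrak{l}_A,\mathfrak{Y}_{\mathfrak{E}_B})}$, $\Phi(\mathfrak{Y}_{\mathfrak{E}_A},\overline{\mathfrak{l}_B})=\overline{\Phi(\mathfrak{Y}_{\mathfrak{E}_A},\mathfrak{l}_B)}$, $\Phi(\mathfrak{Y}_{\mathfrak{E}_A},\mathfrak{Y}_{\mathfrak{E}_B})=\mathbf{Y}$, ordered pointwise (infima computed pointwise). The pure tensor embedding $\iota:\mathfrak{S}_A\times\mathfrak{S}_B\to\check{S}_{AB}$ is $\iota(\sigma_A,\sigma_B)(\mathfrak{l}_A,\mathfrak{l}_B)=\epsilon^{\mathfrak{S}_A}_{\mathfrak{l}_A}(\sigma_A)\bullet\epsilon^{\mathfrak{S}_B}_{\mathfrak{l}_B}(\sigma_B)$. *)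

Inductive B3 : Type := Yb | Nb | Bot.

Definition leB (x y : B3) : Prop := x = Bot \/ x = y.

Definition negB (x : B3) : B3 :=
  match x with Yb => Nb | Nb => Yb | Bot => Bot end.

Definition mulB (x y : B3) : B3 :=
  match y with
  | Yb => x
  | Nb => Nb
  | Bot => match x with Nb => Nb | _ => Bot end
  end.

Definition is_inf {T I : Type} (le : T -> T -> Prop) (f : I -> T) (x : T) : Prop :=
  (forall i, le x (f i)) /\ (forall y, (forall i, le y (f i)) -> le y x).

Definition is_inf_in {T I : Type} (P : T -> Prop) (le : T -> T -> Prop)
  (f : I -> T) (x : T) : Prop :=
  P x /\ (forall i, le x (f i)) /\
  (forall y, P y -> (forall i, le y (f i)) -> le y x).

(** States/Effects Chu spaces. Infima are over nonempty families
    (down-complete Inf semi-lattices). *)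
Record ChuSE : Type := {
  St : Type;
  Ef : Type;
  leS : St -> St -> Prop;
  leE : Ef -> Ef -> Prop;
  leS_refl : forall s, leS s s;
  leS_trans : forall s t u, leS s t -> leS t u -> leS s u;
  leS_antisym : forall s t, leS s t -> leS t s -> s = t;
  leE_refl : forall l, leE l l;
  leE_trans : forall l m n, leE l m -> leE m n -> leE l n;
  leE_antisym : forall l m, leE l m -> leE m l -> l = m;
  infS_ex : forall (I : Type) (f : I -> St), inhabited I -> exists s, is_inf leS f s;
  infE_ex : forall (I : Type) (f : I -> Ef), inhabited I -> exists l, is_inf leE f l;
  ev : Ef -> St -> B3;
  ev_infS : forall (l : Ef) (I : Type) (f : I -> St) (s : St),
      inhabited I -> is_inf leS f s -> is_inf leB (fun i => ev l (f i)) (ev l s);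
  ev_infE : forall (s : St) (I : Type) (f : I -> Ef) (l : Ef),
      inhabited I -> is_inf leE f l -> is_inf leB (fun i => ev (f i) s) (ev l s);
  negE : Ef -> Ef;
  ev_negE : forall l s, ev (negE l) s = negB (ev l s);
  YE : Ef;
  ev_YE : forall s, ev YE s = Yb
}.

(** The maximal tensor product Š_AB, as a subset of the maps E_A × E_B -> 𝔅. *)
Definition maxTensor (A B : ChuSE) (Phi : Ef A -> Ef B -> B3) : Prop :=
  (forall (lB : Ef B) (I : Type) (f : I -> Ef A) (lA : Ef A),
      inhabited I -> is_inf (leE A) f lA ->
      is_inf leB (fun i => Phi (f i) lB) (Phi lA lB)) /\
  (forall (lA : Ef A) (I : Type) (f : I -> Ef B) (lB : Ef B),
      inhabited I -> is_inf (leE B) f lB ->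
      is_inf leB (fun i => Phi lA (f i)) (Phi lA lB)) /\
  (forall lA, Phi (negE A lA) (YE B) = negB (Phi lA (YE B))) /\
  (forall lB, Phi (YE A) (negE B lB) = negB (Phi (YE A) lB)) /\
  Phi (YE A) (YE B) = Yb.

Definition leAB {A B : ChuSE} (Phi Psi : Ef A -> Ef B -> B3) : Prop :=
  forall lA lB, leB (Phi lA lB) (Psi lA lB).

Definition iota {A B : ChuSE} (sA : St A) (sB : St B) : Ef A -> Ef B -> B3 :=
  fun lA lB => mulB (ev A lA sA) (ev B lB sB).

(* Evaluation preserves infima of states, and in the flat order of 𝔅 the
   product with a fixed element preserves nonempty infima (a nonempty family
   has infimum c <> ⊥ only if it is constantly c).  Hence ι(inf σ_i, σ_B) is
   the pointwise infimum of the ι(σ_i, σ_B); since it lies in Š_AB and the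
   order of Š_AB is pointwise, it is their infimum there. *)


Lemma mulB_comm x y : mulB x y = mulB y x.
Proof. destruct x, y; reflexivity. Qed.

Lemma mulB_monotone_l a b y : leB a b -> leB (mulB a y) (mulB b y).
Proof. intros [-> | ->]; destruct b, y; cbv; auto. Qed.

Lemma is_inf_ext {T I : Type} (le : T -> T -> Prop) (f g : I -> T) x :
  (forall i, f i = g i) -> is_inf le f x -> is_inf le g x.
Proof.
  intros Efg [Hlow Hgr]; split.
  - intro i; rewrite <- Efg; apply Hlow.
  - intros y Hy; apply Hgr; intro i; rewrite Efg; apply Hy.
Qed.

Lemma is_inf_leB_const (I : Type) (g : I -> B3) x c :
  inhabited I -> is_inf leB g x -> (forall i, g i = c) -> x = c.
Proof.
  intros [i0] [Hlow Hgr] Hc.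
  destruct (Hgr c (fun i => or_intror (eq_sym (Hc i)))) as [-> | <-]; [|reflexivity].
  destruct (Hlow i0) as [-> | ->]; [reflexivity | apply Hc].
Qed.

Lemma mulB_inf_l (I : Type) (g : I -> B3) x y :
  inhabited I -> is_inf leB g x -> is_inf leB (fun i => mulB (g i) y) (mulB x y).
Proof.
  intros HI Hx. pose proof HI as [i0]. split.
  - intro i; apply mulB_monotone_l, (proj1 Hx).
  - intros z Hz.
    assert (Hz0 : z = Bot \/ z <> Bot) by (destruct z; auto; right; discriminate).
    destruct Hz0 as [-> | Hnz]; [left; reflexivity | right].
    assert (Hgz : forall i, mulB (g i) y = z) by (intro i; destruct (Hz i); congruence).
    destruct y; cbn in Hgz |- *.
    + symmetry; exact (is_inf_leB_const I g x z HI Hx Hgz).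
    + exact (eq_sym (Hgz i0)).
    + (* z <> ⊥ forces every g i = N, the only factor with N • ⊥ <> ⊥ *)
      assert (Hg : forall i, g i = Nb)
        by (intro i; specialize (Hgz i); destruct (g i); congruence).
      rewrite (is_inf_leB_const I g x Nb HI Hx Hg).
      specialize (Hgz i0); rewrite Hg in Hgz; exact (eq_sym Hgz).
Qed.

Lemma mulB_inf_r (I : Type) (g : I -> B3) x y :
  inhabited I -> is_inf leB g x -> is_inf leB (fun i => mulB y (g i)) (mulB y x).
Proof.
  intros HI Hx. rewrite mulB_comm.
  apply (is_inf_ext _ (fun i => mulB (g i) y)); [intro; apply mulB_comm|].
  apply mulB_inf_l; assumption.
Qed.

Lemma iota_maxTensor (A B : ChuSE) (sA : St A) (sB : St B) :
  maxTensor A B (iota sA sB).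
Proof.
  unfold maxTensor, iota. split; [|split; [|split; [|split]]].
  - intros lB I f lA HI Hf; apply mulB_inf_l, ev_infE; assumption.
  - intros lA I f lB HI Hf; apply mulB_inf_r, ev_infE; assumption.
  - intro lA; rewrite ev_YE, ev_negE; destruct (ev A lA sA); reflexivity.
  - intro lB; rewrite ev_YE, ev_negE; destruct (ev B lB sB); reflexivity.
  - rewrite !ev_YE; reflexivity.
Qed.

Lemma is_inf_in_pointwise {A B : ChuSE} (P : (Ef A -> Ef B -> B3) -> Prop)
    (I : Type) (Phi : I -> Ef A -> Ef B -> B3) (Psi : Ef A -> Ef B -> B3) :
  P Psi -> (forall lA lB, is_inf leB (fun i => Phi i lA lB) (Psi lA lB)) ->
  is_inf_in P (@leAB A B) Phi Psi.
Proof.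
  intros HP Hinf. split; [exact HP | split].
  - intros i lA lB; apply (proj1 (Hinf lA lB)).
  - intros Xi _ HXi lA lB; apply (proj2 (Hinf lA lB)); intro i; apply HXi.
Qed.

Lemma iota_inf_l (A B : ChuSE) (I : Type) (sA : I -> St A) (sB : St B) (s : St A) :
  inhabited I -> is_inf (leS A) sA s ->
  forall lA lB, is_inf leB (fun i => iota (sA i) sB lA lB) (iota s sB lA lB).
Proof. intros HI Hs lA lB; apply mulB_inf_l, ev_infS; assumption. Qed.

Lemma iota_inf_r (A B : ChuSE) (I : Type) (sB : I -> St B) (sA : St A) (s : St B) :
  inhabited I -> is_inf (leS B) sB s ->
  forall lA lB, is_inf leB (fun i => iota sA (sB i) lA lB) (iota sA s lA lB).
Proof. intros HI Hs lA lB; apply mulB_inf_r, ev_infS; assumption. Qed.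

Theorem mainTheorem2 (A B : ChuSE) :
  (forall (I : Type) (sA : I -> St A) (sB : St B) (s : St A),
      inhabited I -> is_inf (leS A) sA s ->
      is_inf_in (maxTensor A B) (@leAB A B)
        (fun i => iota (sA i) sB) (iota s sB)) /\
  (forall (I : Type) (sB : I -> St B) (sA : St A) (s : St B),
      inhabited I -> is_inf (leS B) sB s ->
      is_inf_in (maxTensor A B) (@leAB A B)
        (fun i => iota sA (sB i)) (iota sA s)).
Proof.
  split.
  - intros I sA sB s HI Hs.
    apply is_inf_in_pointwise; [apply iota_maxTensor | apply iota_inf_l; assumption].
  - intros I sB sA s HI Hs.
    apply is_inf_in_pointwise; [apply iota_maxTensor | apply iota_inf_r; assumption].
Qed.
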